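(* The nested cross decomposition (NCD) algorithm described in the context finds an optimal solution of the linear primary master problem $[\mathrm{PMP\text{-}LR}]$ within a finite number of iterations.
   Context: Setting. There is a finite scenario tree with node set $\mathcal N$; node $n$ has probability $\pi_n$, and $\mathcal P_n$ denotes the set of nodes on the path from the root to $n$ (inclusive). At each node $n$ there is an expansion decision $x_n$ (binary in the original problem) in a polyhedral set $X_n$ of upper-level constraints, with investment cost $\mathrm{TIC}^n(x_n)$ (linear), and a cumulative-capacity vector $z_n\in\{0,1\}^d$. For each node $n$ there is a finite set $K_n$ of representative days and, for each $k\in K_n$, a finite set $\mathbb P^{n_k}$ of sampled lower-level scenarios $\zeta=\zeta^p_{n_k}$ with probabilities. Given $z_n$, the operational subproblem $[\mathrm{SP}(\zeta)]$ is $\min_y \mathrm{TOC}(y)$ s.t. $By\le V(\zeta)(b+A_nz_n)$, $y\in Y_n^k(\zeta)$, where $Y_n^k(\zeta)$ is a mixed-integer set with binary integer variables, independent of $z_n$; the model has relatively complete recourse (every subproblem is feasible for every admissible upper-level decision). The recourse function is $\mathbb Q(z_n)=\pi_n\sum_{k\in K_n}\mathbf E_\zeta[\text{optimal value of }\mathrm{SP}(\zeta)]$. Let $\mathcal F_n$ index the finitely many possible capacity outcomes $z_n^i\in\{0,1\}^d$ at node $n$, and let $(\overline{\mathrm{TOC}}_n^k)^i$ be the expected optimal operating cost in day $k$ under capacity $z_n^i$. The problem $[\mathrm{PMP\text{-}LR}]$ is $\min_{x,\lambda}\ \sum_{n\in\mathcal N}\pi_n\big[\mathrm{TIC}^n(x_n)+\sum_{i\in\mathcal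 F_n}\sum_{k\in K_n}(\overline{\mathrm{TOC}}_n^k)^i\lambda_n^i\big]$ s.t. $\sum_{i\in\mathcal F_n}z_n^i\lambda_n^i\le\sum_{m\in\mathcal P_n}x_m$ (duals $\psi_n$), $\sum_{m\in\mathcal P_n}x_m\le\mathbf 1$, $\sum_{i\in\mathcal F_n}\lambda_n^i=1$ (dual $\psi_n^0$) for all $n$, with $x_n$ in the continuous relaxation of $X_n\cap\{0,1\}^d$ and $\lambda_n^i\in[0,1]$. NCD algorithm: (1) Initialize a restricted version $[\mathrm{RPMP\text{-}LR}]$ of $[\mathrm{PMP\text{-}LR}]$ with a subset of the columns $\lambda_n^i$, and for each $n$ a relaxed secondary master problem $[\mathrm{rSMP}_n]$. (2) Outer loop: solve $[\mathrm{RPMP\text{-}LR}]$ and obtain duals $(\hat\psi_n,\hat\psi_n^0)$. For each $n$, run the inner loop on $[\mathrm{SMP}_n]:\ \min -\hat\psi_n^\intercal z_n-\hat\psi_n^0+\theta$ s.t. $z_n\in\{0,1\}^d$ and cutting planes in $(z_n,\theta)$: solve $[\mathrm{rSMP}_n]$ obtaining $(\hat\theta,\hat z_n)$; solve the LP relaxations of all $\mathrm{SP}(\zeta^p_{n_k})$ at $\hat z_n$ and, if $\hat\theta$ is below their expected (probability-weighted) value $\mathbb Q_{LP}(\hat z_n)$, add Benders cuts and repeat; else solve all mixed-integer subproblems and, if $\hat\theta\ge\mathbb Q(\hat z_n)$, stop the inner loop, otherwise add integer L-shaped (Laporte–Louveaux) cuts and repeat. Cuts generated are kept across outer iterations. (3)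 Add the resulting columns (capacity outcomes $\hat z_n$ with their costs) to $[\mathrm{RPMP\text{-}LR}]$. (4) Repeat until no column with negative reduced cost exists, i.e. the optimal value of $[\mathrm{SMP}_n]$ is $\ge 0$ for all $n$. *)

From mathcomp Require Import all_boot all_order all_algebra.
Set Implicit Arguments. Unset Strict Implicit. Unset Printing Implicit Defensive.
Import Order.TTheory GRing.Theory Num.Theory.
Local Open Scope ring_scope.

Notation bvec d := {ffun 'I_d -> bool}.

(* a cutting plane  theta >= c.1 + sum_j c.2 j * z_j *)
Definition cut (R : Type) (d : nat) := (R * ('I_d -> R))%type.

(* output of an LP solver on [RPMP-LR]: primal (x, lambda) and dual values.
   spsi = duals psi_n of the linking constraints, spsi0 = duals psi_n^0 of the
   convexity constraints; ssig, seta, subx = duals of the remaining rows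
   (sum_{m in P_n} x_m <= 1,  G_n x_n <= h_n (i.e. x_n in X_n),  x_n <= 1). *)
Record pd_sol (R : Type) (Node : finType) (d r : nat) := PDSol {
  sx : Node -> 'I_d -> R;
  slam : Node -> bvec d -> R;
  spsi : Node -> 'I_d -> R;
  spsi0 : Node -> R;
  ssig : Node -> 'I_d -> R;
  seta : Node -> 'I_r -> R;
  subx : Node -> 'I_d -> R }.

Section NCD.
Variable R : realFieldType.
Variables (Node Day Scen : finType) (d r : nat).

Definition bR (b : bool) : R := (b : nat)%:R.

Variable parent : Node -> Node.
(* P_n : nodes on the path from the root to n (inclusive) *)
Definition path_set (n : Node) : {set Node} := [set m | fconnect parent n m].

Variable pi : Node -> R.
Variable K : Node -> {set Day}.
Variable Psamp : Node -> Day -> {set Scen}.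
Variable prob : Node -> Day -> Scen -> R.
Variable spMIP : Node -> Day -> Scen -> bvec d -> R. (* opt. value of SP(zeta) at z *)
Variable spLP : Node -> Day -> Scen -> bvec d -> R.  (* opt. value of its LP relaxation *)

Definition TOCbar (n : Node) (k : Day) (z : bvec d) : R :=
  \sum_(p in Psamp n k) prob n k p * spMIP n k p z.
Definition Qrec (n : Node) (z : bvec d) : R := pi n * \sum_(k in K n) TOCbar n k z.
Definition QLPrec (n : Node) (z : bvec d) : R :=
  pi n * \sum_(k in K n) \sum_(p in Psamp n k) prob n k p * spLP n k p z.

Variable cI : Node -> 'I_d -> R.
Variable G : Node -> 'I_r -> 'I_d -> R.           (* X_n = { x | G_n x <= h_n } *)
Variable h : Node -> 'I_r -> R.

Definition TIC (n : Node) (x : 'I_d -> R) : R := \sum_j cI n j * x j.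

(* feasibility in [RPMP-LR] restricted to the columns S n (S n = all binary
   vectors gives [PMP-LR]) *)
Definition pmp_feasible (S : Node -> {set bvec d})
    (x : Node -> 'I_d -> R) (lam : Node -> bvec d -> R) : Prop :=
  (forall n j, \sum_(z : bvec d) bR (z j) * lam n z <= \sum_(m in path_set n) x m j) /\
  (forall n j, \sum_(m in path_set n) x m j <= 1) /\
  (forall n, \sum_(z : bvec d) lam n z = 1) /\
  (forall n i, \sum_j G n i j * x n j <= h n i) /\
  (forall n j, 0 <= x n j <= 1) /\
  (forall n z, 0 <= lam n z <= 1) /\
  (forall n z, z \notin S n -> lam n z = 0).

Definition pmp_obj (x : Node -> 'I_d -> R) (lam : Node -> bvec d -> R) : R :=
  \sum_n pi n * (TIC n (x n) + \sum_(z : bvec d) \sum_(k in K n) TOCbar n k z * lam n z).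

Definition pmp_optimal (x : Node -> 'I_d -> R) (lam : Node -> bvec d -> R) : Prop :=
  pmp_feasible (fun _ => setT) x lam /\
  forall x' lam', pmp_feasible (fun _ => setT) x' lam' -> pmp_obj x lam <= pmp_obj x' lam'.

(* LP dual of [RPMP-LR] with columns S (sign convention: min problem,
   duals of <=-rows are <= 0, duals of equality rows are free; the bounds
   lambda <= 1, implied by sum lambda = 1 and lambda >= 0, carry no dual). *)
Definition dual_feasible (S : Node -> {set bvec d}) (s : pd_sol R Node d r) : Prop :=
  (forall n j, spsi s n j <= 0) /\ (forall n j, ssig s n j <= 0) /\
  (forall n i, seta s n i <= 0) /\ (forall n j, subx s n j <= 0) /\
  (forall m j, \sum_(n | m \in path_set n) (ssig s n j - spsi s n j)
                   + \sum_i seta s m i * G m i j + subx s m j <= pi m * cI m j) /\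
  (forall n z, z \in S n ->
         \sum_j spsi s n j * bR (z j) + spsi0 s n <= Qrec n z).

Definition dual_obj (s : pd_sol R Node d r) : R :=
  \sum_n (\sum_j ssig s n j + spsi0 s n + \sum_i seta s n i * h n i + \sum_j subx s n j).

Definition pd_optimal (S : Node -> {set bvec d}) (s : pd_sol R Node d r) : Prop :=
  [/\ pmp_feasible S (sx s) (slam s), dual_feasible S s
    & pmp_obj (sx s) (slam s) = dual_obj s].

Definition cutval (c : cut R d) (z : bvec d) : R := c.1 + \sum_j c.2 j * bR (z j).

Variable Lb : Node -> R.

Definition rsmp_feasible (n : Node) (cs : seq (cut R d)) (t : R) (z : bvec d) : bool :=
  (Lb n <= t) && all (fun c => cutval c z <= t) cs.

Definition smp_obj (psi : 'I_d -> R) (psi0 : R) (t : R) (z : bvec d) : R :=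
  - (\sum_j psi j * bR (z j)) - psi0 + t.

Definition rsmp_optimal (n : Node) (psi : 'I_d -> R) (psi0 : R) (cs : seq (cut R d))
    (tz : R * bvec d) : Prop :=
  rsmp_feasible n cs tz.1 tz.2 /\
  forall t z, rsmp_feasible n cs t z -> smp_obj psi psi0 tz.1 tz.2 <= smp_obj psi psi0 t z.

(* integer L-shaped (Laporte--Louveaux) cut at zh:
   theta >= (Q(zh) - L)(sum_{zh_j=1} z_j - sum_{zh_j=0} z_j - |S(zh)| + 1) + L *)
Definition lshaped_cut (n : Node) (zh : bvec d) : cut R d :=
  (Lb n + (Qrec n zh - Lb n) * (1 - (#|[set j | zh j]|)%:R),
   fun j => (Qrec n zh - Lb n) * (if zh j then 1 else -1)).

Variable rpmp : (Node -> {set bvec d}) -> pd_sol R Node d r.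
Variable rsmp : Node -> ('I_d -> R) -> R -> seq (cut R d) -> R * bvec d.
Variable benders : Node -> bvec d -> cut R d.

Fixpoint inner (fuel : nat) (n : Node) (psi : 'I_d -> R) (psi0 : R)
    (cs : seq (cut R d)) : option (R * bvec d * seq (cut R d)) :=
  match fuel with
  | 0 => None
  | f.+1 =>
    let tz := rsmp n psi psi0 cs in
    if tz.1 < QLPrec n tz.2 then inner f n psi psi0 (benders n tz.2 :: cs)
    else if Qrec n tz.2 <= tz.1 then Some (tz.1, tz.2, cs)
    else inner f n psi psi0 (lshaped_cut n tz.2 :: cs)
  end.

Definition some_res (o : option (R * bvec d * seq (cut R d))) : bool :=
  if o is Some _ then true else false.
Definition res_theta (o : option (R * bvec d * seq (cut R d))) : R :=
  if o is Some (t, _, _) then t else 0.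
Definition res_z (o : option (R * bvec d * seq (cut R d))) : bvec d :=
  if o is Some (_, z, _) then z else [ffun => false].
Definition res_cuts (o : option (R * bvec d * seq (cut R d))) : seq (cut R d) :=
  if o is Some (_, _, cs) then cs else [::].

(* outer loop: at most [fuel] outer iterations, each inner loop at most [ifuel]
   iterations; returns the final solution of [RPMP-LR] (None = not finished) *)
Fixpoint outer (fuel ifuel : nat) (S : Node -> {set bvec d}) (C : Node -> seq (cut R d))
  : option ((Node -> 'I_d -> R) * (Node -> bvec d -> R)) :=
  match fuel with
  | 0 => None
  | f.+1 =>
    let s := rpmp S in
    let res := fun n => inner ifuel n (spsi s n) (spsi0 s n) (C n) in
    if [forall n, some_res (res n)] then
      if [forall n, 0 <= smp_obj (spsi s n) (spsi0 s n) (res_theta (res n)) (res_z (res n))]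
      then Some (sx s, slam s)
      else outer f ifuel (fun n => res_z (res n) |: S n) (fun n => res_cuts (res n))
    else None
  end.

End NCD.

(* Benders cuts are tight for Q_LP and integer L-shaped cuts are tight for Q at
   the point that generates them, while both stay below Q everywhere.  So every
   iteration of an inner loop removes its point from the finite set of binary
   vectors where all cuts lie strictly below Q_LP, or from the one where they
   lie strictly below Q; after at most 2^(d+1) iterations the inner loop stops,
   and then its point, valued by Q, solves [SMP_n] exactly.  If all these
   optimal reduced costs are nonnegative, the duals of [RPMP-LR] are dual
   feasible for [PMP-LR], and weak duality together with the zero duality gap
   of [RPMP-LR] makes its primal solution optimal.  Otherwise some node gets a
   column of negative reduced cost, which is new because dual feasibility of
   [RPMP-LR] gives its own columns nonnegative reduced cost; as there are only
   finitely many columns, the outer loop stops. *)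

From mathcomp Require Import all_boot all_order all_algebra.
From mathcomp Require Import zify ring lra.
Set Implicit Arguments. Unset Strict Implicit. Unset Printing Implicit Defensive.
Import Order.TTheory GRing.Theory Num.Theory.
Local Open Scope ring_scope.

Section BinaryVectors.
Variables (R : realFieldType) (d : nat).

Lemma sum_bR (z : bvec d) : \sum_j bR R (z j) = (#|[set j | z j]|)%:R.
Proof.
rewrite /bR -natr_sum -sum1_card [in RHS]big_mkcond /=.
by congr (_%:R); apply: eq_bigr => j _; rewrite inE; case: (z j).
Qed.

Definition signed_overlap (zh z : bvec d) : R :=
  \sum_j (if zh j then 1 else -1) * bR R (z j).

Lemma signed_overlap_id (zh : bvec d) :
  signed_overlap zh zh = (#|[set j | zh j]|)%:R.
Proof.
by rewrite -sum_bR; apply: eq_bigr => j _; rewrite /bR; case: (zh j); rewrite /= ?mul1r ?mulr0.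
Qed.

Lemma signed_overlap_lt (zh z : bvec d) : z != zh ->
  signed_overlap zh z <= (#|[set j | zh j]|)%:R - 1.
Proof.
move=> neq_z; have [j0 neq_j0] : exists j0, z j0 != zh j0.
  apply/existsP; apply: contraNT neq_z => /existsPn eq_z.
  by apply/eqP/ffunP => j; apply/eqP; rewrite -[_ == _]negbK eq_z.
rewrite -sum_bR /signed_overlap (bigD1 j0) // [X in _ <= X - _](bigD1 j0) //=.
have le_rest : \sum_(j | j != j0) (if zh j then 1 else -1) * bR R (z j)
               <= \sum_(j | j != j0) bR R (zh j).
  by apply: ler_sum => j _; rewrite /bR; case: (zh j); case: (z j) => /=; lra.
have le_j0 : (if zh j0 then 1 else -1) * bR R (z j0) <= bR R (zh j0) - 1.
  by move: neq_j0; rewrite /bR; case: (zh j0); case: (z j0) => //= _; lra.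
by rewrite addrAC; apply: lerD.
Qed.

End BinaryVectors.

Section Cuts.
Variables (R : realFieldType) (d : nat).
Implicit Types (f : bvec d -> R) (c : cut R d) (cs : seq (cut R d)).

Definition cuts_below f cs := forall z, all (fun c => cutval c z <= f z) cs.

Definition unsettled f cs : {set bvec d} :=
  [set z | all (fun c => cutval c z < f z) cs].

Lemma unsettled_cons f c cs : unsettled f (c :: cs) \subset unsettled f cs.
Proof. by apply/subsetP => z; rewrite !inE => /andP []. Qed.

Lemma unsettled_cut_proper f c cs t z :
  all (fun c => cutval c z <= t) cs -> t < f z -> cutval c z = f z ->
  unsettled f (c :: cs) \proper unsettled f cs.
Proof.
move=> below_t lt_t tight_z; apply/properP; split; first exact: unsettled_cons.
exists z; last by rewrite inE /= tight_z ltxx.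
by rewrite inE; apply: sub_all below_t => c' /le_lt_trans; apply.
Qed.

End Cuts.

Section InnerLoop.
Variables (R : realFieldType) (Node Day Scen : finType) (d : nat).
Variable pi : Node -> R.
Variable K : Node -> {set Day}.
Variable Psamp : Node -> Day -> {set Scen}.
Variable prob : Node -> Day -> Scen -> R.
Variables spMIP spLP : Node -> Day -> Scen -> bvec d -> R.
Variable Lb : Node -> R.
Variable rsmp : Node -> ('I_d -> R) -> R -> seq (cut R d) -> R * bvec d.
Variable benders : Node -> bvec d -> cut R d.
Hypothesis pi_ge0 : forall n, 0 <= pi n.
Hypothesis prob_ge0 : forall n k p, 0 <= prob n k p.
Hypothesis spLP_le_spMIP : forall n k p z, spLP n k p z <= spMIP n k p z.

Local Notation Q := (Qrec pi K Psamp prob spMIP).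
Local Notation QLP := (QLPrec pi K Psamp prob spLP).
Local Notation lshaped := (lshaped_cut pi K Psamp prob spMIP Lb).

Hypothesis Lb_le_Q : forall n z, Lb n <= Q n z.
Hypothesis rsmpP : forall n psi psi0 cs, rsmp_optimal Lb n psi psi0 cs (rsmp n psi psi0 cs).
Hypothesis benders_le_QLP : forall n zh z, cutval (benders n zh) z <= QLP n z.
Hypothesis benders_tight : forall n zh, cutval (benders n zh) zh = QLP n zh.

Lemma QLP_le_Q n z : QLP n z <= Q n z.
Proof.
rewrite /QLPrec /Qrec; apply: ler_wpM2l => //; apply: ler_sum => k _.
by apply: ler_sum => p _; apply: ler_wpM2l.
Qed.

Lemma lshaped_cutvalE n zh z : cutval (lshaped n zh) z =
  Lb n + (Q n zh - Lb n) * (1 - (#|[set j | zh j]|)%:R + signed_overlap R zh z).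
Proof.
rewrite /cutval /lshaped_cut /signed_overlap /= [X in _ = _ + X]mulrDr addrA mulr_sumr.
by congr (_ + _); apply: eq_bigr => j _; rewrite mulrA.
Qed.

Lemma lshaped_cut_tight n zh : cutval (lshaped n zh) zh = Q n zh.
Proof. by rewrite lshaped_cutvalE signed_overlap_id; ring. Qed.

Lemma lshaped_cut_le_Q n zh z : cutval (lshaped n zh) z <= Q n z.
Proof.
have [-> | neq_z] := eqVneq z zh; first by rewrite lshaped_cut_tight.
apply: le_trans (Lb_le_Q n z); rewrite lshaped_cutvalE gerDl.
apply: mulr_ge0_le0; first by rewrite subr_ge0.
by have := signed_overlap_lt R neq_z; lra.
Qed.

Definition potential n cs := (#|unsettled (QLP n) cs| + #|unsettled (Q n) cs|)%N.

Lemma potential_bound n cs : (potential n cs <= 2 * #|{: bvec d}|)%N.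
Proof. by rewrite /potential mul2n -addnn; apply: leq_add; apply: max_card. Qed.

Lemma inner_solves f n psi psi0 cs :
  cuts_below (Q n) cs -> (potential n cs < f)%N ->
  exists2 cs', cuts_below (Q n) cs' &
    let tz := rsmp n psi psi0 cs' in
    inner pi K Psamp prob spMIP spLP Lb rsmp benders f n psi psi0 cs = Some (tz.1, tz.2, cs')
    /\ Q n tz.2 <= tz.1.
Proof.
elim: f cs => [//|f IH] cs below_cs lt_f /=.
have [/andP [_ below_t] _] := rsmpP n psi psi0 cs.
set t := (rsmp n psi psi0 cs).1 in below_t *; set z := (rsmp n psi psi0 cs).2 in below_t *.
have drop_potential f1 f2 c : t < f1 z -> cutval c z = f1 z ->
    (f1 = QLP n /\ f2 = Q n) \/ (f1 = Q n /\ f2 = QLP n) ->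
    (potential n (c :: cs) < f)%N.
  move=> lt_t tight_z f12.
  have lt1 := proper_card (unsettled_cut_proper below_t lt_t tight_z).
  have le2 := subset_leq_card (unsettled_cons f2 c cs).
  by move: lt_f; rewrite /potential; case: f12 => [[-> ->] | [-> ->]] in lt1 le2 *; lia.
case: ifP => [lt_QLP | _].
  apply: IH; last by apply: drop_potential (benders_tight n z) _; [exact: lt_QLP | left].
  by move=> y /=; rewrite (le_trans (benders_le_QLP _ _ _) (QLP_le_Q _ _)) below_cs.
case: ifP => [le_Q | /negbT]; first by exists cs.
rewrite -ltNge => lt_Q.
apply: IH; last by apply: drop_potential (lshaped_cut_tight n z) _; [exact: lt_Q | right].
by move=> y /=; rewrite lshaped_cut_le_Q below_cs.
Qed.

Definition inner_fuel := (2 * #|{: bvec d}|).+1.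

Lemma inner_solves_smp n psi psi0 cs : cuts_below (Q n) cs ->
  let o := inner pi K Psamp prob spMIP spLP Lb rsmp benders inner_fuel n psi psi0 cs in
  [/\ some_res o, cuts_below (Q n) (res_cuts o), Q n (res_z o) <= res_theta o &
      forall z, smp_obj psi psi0 (res_theta o) (res_z o) <= smp_obj psi psi0 (Q n z) z].
Proof.
move=> below_cs.
have [cs' below_cs' [-> le_Q]] :=
  inner_solves psi psi0 below_cs (potential_bound n cs : (_ < inner_fuel)%N).
split=> // z; have [_ rsmp_min] := rsmpP n psi psi0 cs'.
by apply: rsmp_min; rewrite /rsmp_feasible Lb_le_Q below_cs'.
Qed.

End InnerLoop.

Section WeakDuality.
Variables (R : realFieldType) (Node Day Scen : finType) (d r : nat).
Variable parent : Node -> Node.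
Variable pi : Node -> R.
Variable K : Node -> {set Day}.
Variable Psamp : Node -> Day -> {set Scen}.
Variable prob : Node -> Day -> Scen -> R.
Variable spMIP : Node -> Day -> Scen -> bvec d -> R.
Variable cI : Node -> 'I_d -> R.
Variable G : Node -> 'I_r -> 'I_d -> R.
Variable h : Node -> 'I_r -> R.
Implicit Types (s : pd_sol R Node d r) (x : Node -> 'I_d -> R) (lam : Node -> bvec d -> R).

Local Notation Q := (Qrec pi K Psamp prob spMIP).
Local Notation P := (path_set parent).

Lemma exchange_path_sum (a b : Node -> R) :
  \sum_m (\sum_(n | m \in P n) a n) * b m = \sum_n a n * \sum_(m in P n) b m.
Proof.
under eq_bigr do rewrite mulr_suml.
rewrite (exchange_big_dep xpredT) //=; apply: eq_bigr => n _.
by rewrite mulr_sumr; apply: eq_bigl.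
Qed.

Definition dual_row s m j : R :=
  \sum_(n | m \in P n) (ssig s n j - spsi s n j) + \sum_i seta s m i * G m i j + subx s m j.

Definition dual_col s n (z : bvec d) : R := \sum_j spsi s n j * bR R (z j) + spsi0 s n.

Definition lagrangian s x lam : R :=
  \sum_m \sum_j dual_row s m j * x m j + \sum_n \sum_(z : bvec d) dual_col s n z * lam n z.

Lemma smp_objE s n t (z : bvec d) : smp_obj (spsi s n) (spsi0 s n) t z = t - dual_col s n z.
Proof. by rewrite /smp_obj /dual_col opprD addrC addrA. Qed.

Lemma pmp_objE x lam : pmp_obj pi K Psamp prob spMIP cI x lam =
  \sum_m \sum_j pi m * cI m j * x m j + \sum_n \sum_(z : bvec d) Q n z * lam n z.
Proof.
rewrite /pmp_obj /TIC -big_split; apply: eq_bigr => n _; rewrite mulrDr mulr_sumr.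
congr (_ + _); first by apply: eq_bigr => j _; rewrite mulrA.
rewrite mulr_sumr; apply: eq_bigr => z _.
by rewrite /Qrec -mulrA mulr_suml.
Qed.

Lemma sum_dual_row s x : \sum_m \sum_j dual_row s m j * x m j =
  \sum_n (\sum_j (ssig s n j - spsi s n j) * \sum_(m in P n) x m j
          + \sum_i seta s n i * (\sum_j G n i j * x n j) + \sum_j subx s n j * x n j).
Proof.
under eq_bigr do under eq_bigr do rewrite /dual_row !mulrDl.
under eq_bigr do rewrite !big_split.
rewrite !big_split /=; congr (_ + _ + _).
  rewrite exchange_big [RHS]exchange_big; apply: eq_bigr => j _ /=.
  exact: exchange_path_sum.
apply: eq_bigr => m _; under eq_bigr do rewrite mulr_suml.
rewrite exchange_big; apply: eq_bigr => i _ /=; rewrite mulr_sumr.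
by apply: eq_bigr => j _; rewrite mulrA.
Qed.

Lemma sum_dual_col s n lam : \sum_(z : bvec d) lam n z = 1 ->
  \sum_(z : bvec d) dual_col s n z * lam n z =
  \sum_j spsi s n j * (\sum_(z : bvec d) bR R (z j) * lam n z) + spsi0 s n.
Proof.
move=> lam_sum1; under eq_bigr do rewrite mulrDl mulr_suml.
rewrite big_split /= -mulr_sumr lam_sum1 mulr1 exchange_big /=.
by congr (_ + _); apply: eq_bigr => j _; rewrite mulr_sumr; apply: eq_bigr => z _; rewrite mulrA.
Qed.

Section Feasible.
Variables (S : Node -> {set bvec d}) (s : pd_sol R Node d r).
Variables (x : Node -> 'I_d -> R) (lam : Node -> bvec d -> R).
Hypothesis dual_feas : dual_feasible parent pi K Psamp prob spMIP cI G S s.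
Hypothesis primal_feas : pmp_feasible parent G h S x lam.

Lemma lagrangian_le_pmp_obj : lagrangian s x lam <= pmp_obj pi K Psamp prob spMIP cI x lam.
Proof.
have [_ [_ [_ [_ [row_le col_le]]]]] := dual_feas.
have [_ [_ [_ [_ [x_01 [lam_01 lam_out]]]]]] := primal_feas.
rewrite pmp_objE; apply: lerD; apply: ler_sum => n _.
  by apply: ler_sum => j _; apply: ler_wpM2r; [case/andP: (x_01 n j) | exact: row_le].
apply: ler_sum => z _; have [S_z | notS_z] := boolP (z \in S n).
  by apply: ler_wpM2r; [case/andP: (lam_01 n z) | exact: col_le].
by rewrite lam_out // !mulr0.
Qed.

Lemma dual_obj_le_lagrangian : dual_obj h s <= lagrangian s x lam.
Proof.
have [psi_le0 [sig_le0 [eta_le0 [ub_le0 _]]]] := dual_feas.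
have [link [path_le1 [lam_sum1 [Gx_le [x_01 _]]]]] := primal_feas.
rewrite /lagrangian sum_dual_row -big_split /=; apply: ler_sum => n _.
rewrite sum_dual_col //.
have le_sig : \sum_j ssig s n j <= \sum_j (ssig s n j - spsi s n j) * \sum_(m in P n) x m j
                                   + \sum_j spsi s n j * (\sum_(z : bvec d) bR R (z j) * lam n z).
  rewrite -big_split; apply: ler_sum => j /= _.
  (* [ssig <= ssig * X] as [X <= 1], and [spsi * (Y - X) >= 0] as [Y <= X]. *)
  have := sig_le0 n j; have := psi_le0 n j; have := link n j; have := path_le1 n j.
  move: (ssig s n j) (spsi s n j) (\sum_(m in P n) x m j) (\sum_(z : bvec d) _) => a b u v.
  nra.
have le_eta : \sum_i seta s n i * h n i <= \sum_i seta s n i * (\sum_j G n i j * x n j).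
  by apply: ler_sum => i _; apply: ler_wnM2l; [exact: eta_le0 | exact: Gx_le].
have le_ub : \sum_j subx s n j <= \sum_j subx s n j * x n j.
  apply: ler_sum => j _; have := ub_le0 n j; case/andP: (x_01 n j) => _.
  move: (subx s n j) (x n j) => a u; nra.
lra.
Qed.

End Feasible.

Lemma weak_duality S s x lam :
  dual_feasible parent pi K Psamp prob spMIP cI G S s ->
  pmp_feasible parent G h S x lam ->
  dual_obj h s <= pmp_obj pi K Psamp prob spMIP cI x lam.
Proof.
move=> dual_feas primal_feas.
exact: le_trans (dual_obj_le_lagrangian dual_feas primal_feas)
                (lagrangian_le_pmp_obj dual_feas primal_feas).
Qed.

End WeakDuality.

Lemma pmp_feasible_all_columns (R : realFieldType) (Node : finType) (d r : nat)
    (parent : Node -> Node) (G : Node -> 'I_r -> 'I_d -> R) (h : Node -> 'I_r -> R)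
    (S : Node -> {set bvec d}) x lam :
  pmp_feasible parent G h S x lam -> pmp_feasible parent G h (fun _ => setT) x lam.
Proof. by move=> [? [? [? [? [? [? _]]]]]]; do 6 split => //; move=> n z; rewrite inE. Qed.

Definition column_slack (I T : finType) (S : I -> {set T}) :=
  (#|I| * #|T| - \sum_i #|S i|)%N.

Lemma column_slack_setU1 (I T : finType) (S : I -> {set T}) (z : I -> T) i0 :
  z i0 \notin S i0 -> (column_slack (fun i => z i |: S i) < column_slack S)%N.
Proof.
move=> new_z; have grow : (\sum_i #|S i| < \sum_i #|z i |: S i|)%N.
  rewrite (bigD1 i0) //= [X in (_ < X)%N](bigD1 i0) //= cardsU1 new_z add1n ltnS.
  by rewrite leq_add // leq_sum // => i _; rewrite subset_leq_card ?subsetUr.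
have bound : (\sum_i #|z i |: S i| <= #|I| * #|T|)%N.
  by rewrite -sum_nat_const leq_sum // => i _; apply: max_card.
by rewrite /column_slack; lia.
Qed.

Section OuterLoop.
Variables (R : realFieldType) (Node Day Scen : finType) (d r : nat).
Variable parent : Node -> Node.
Variable pi : Node -> R.
Variable K : Node -> {set Day}.
Variable Psamp : Node -> Day -> {set Scen}.
Variable prob : Node -> Day -> Scen -> R.
Variables spMIP spLP : Node -> Day -> Scen -> bvec d -> R.
Variable cI : Node -> 'I_d -> R.
Variable G : Node -> 'I_r -> 'I_d -> R.
Variable h : Node -> 'I_r -> R.
Variable Lb : Node -> R.
Variable rpmp : (Node -> {set bvec d}) -> pd_sol R Node d r.
Variable rsmp : Node -> ('I_d -> R) -> R -> seq (cut R d) -> R * bvec d.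
Variable benders : Node -> bvec d -> cut R d.
Variable S0 : Node -> {set bvec d}.

Local Notation Q := (Qrec pi K Psamp prob spMIP).
Local Notation QLP := (QLPrec pi K Psamp prob spLP).

Hypothesis pi_ge0 : forall n, 0 <= pi n.
Hypothesis prob_ge0 : forall n k p, 0 <= prob n k p.
Hypothesis spLP_le_spMIP : forall n k p z, spLP n k p z <= spMIP n k p z.
Hypothesis Lb_le_Q : forall n z, Lb n <= Q n z.
Hypothesis rsmpP : forall n psi psi0 cs, rsmp_optimal Lb n psi psi0 cs (rsmp n psi psi0 cs).
Hypothesis benders_le_QLP : forall n zh z, cutval (benders n zh) z <= QLP n z.
Hypothesis benders_tight : forall n zh, cutval (benders n zh) zh = QLP n zh.
Hypothesis rpmpP : forall S : Node -> {set bvec d}, (forall n, S0 n \subset S n) ->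
  pd_optimal parent pi K Psamp prob spMIP cI G h S (rpmp S).

Lemma reduced_costs_ge0_pmp_optimal S s :
  pd_optimal parent pi K Psamp prob spMIP cI G h S s ->
  (forall n z, dual_col s n z <= Q n z) ->
  pmp_optimal parent pi K Psamp prob spMIP cI G h (sx s) (slam s).
Proof.
move=> [primal_feas [? [? [? [? [? _]]]]] no_gap] col_le; split.
  exact: pmp_feasible_all_columns primal_feas.
move=> x lam feas; rewrite no_gap; apply: weak_duality feas.
by do 5 split => //; move=> n z _; apply: col_le.
Qed.

Lemma outer_solves (f : nat) (S : Node -> {set bvec d}) (C : Node -> seq (cut R d)) :
  (forall n, S0 n \subset S n) -> (forall n, cuts_below (Q n) (C n)) ->
  (column_slack S < f)%N ->
  exists x lam,
    outer pi K Psamp prob spMIP spLP Lb rpmp rsmp benders f (inner_fuel d) S C = Some (x, lam)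
    /\ pmp_optimal parent pi K Psamp prob spMIP cI G h x lam.
Proof.
elim: f S C => [//|f IH] S C S0_sub below_C lt_f.
have [_ [_ [_ [_ [_ [_ col_le]]]]] _] := rpmpP S0_sub.
cbn [outer]; set s := rpmp S.
pose res n := inner pi K Psamp prob spMIP spLP Lb rsmp benders (inner_fuel d) n
  (spsi s n) (spsi0 s n) (C n).
rewrite -!/(res _).
have res_ok n := inner_solves_smp pi_ge0 prob_ge0 spLP_le_spMIP Lb_le_Q rsmpP
  benders_le_QLP benders_tight (spsi s n) (spsi0 s n) (below_C n).
rewrite (_ : [forall n, _] = true); last by apply/forallP => n; case: (res_ok n).
case: ifP => [all_ge0 | /negbT /forallPn [n0]].
  exists (sx s), (slam s); split => //; apply: reduced_costs_ge0_pmp_optimal (rpmpP S0_sub) _.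
  move=> n z; have := forallP all_ge0 n; case: (res_ok n) => _ _ _ /(_ z).
  by rewrite !smp_objE; lra.
rewrite -ltNge => neg_n0.
have new_col : res_z (res n0) \notin S n0.
  apply/negP => in_S; have col_le_Q : dual_col s n0 (res_z (res n0)) <= Q n0 (res_z (res n0))
    := col_le n0 _ in_S.
  move: neg_n0; case: (res_ok n0) => _ _ le_theta _.
  by rewrite !smp_objE; lra.
apply: IH => [n | n | ]; first exact: subset_trans (S0_sub n) (subsetUr _ _).
  by case: (res_ok n).
by apply: leq_trans (column_slack_setU1 new_col) _; rewrite -ltnS.
Qed.

End OuterLoop.

Unset Implicit Arguments.

Theorem theorem2 (R : realFieldType) (Node Day Scen : finType) (d r : nat)
  (root : Node) (parent : Node -> Node)
  (Htree_root : parent root = root) (Htree : forall n, fconnect parent n root)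
  (pi : Node -> R) (Hpi : forall n, 0 <= pi n)
  (K : Node -> {set Day}) (Psamp : Node -> Day -> {set Scen})
  (prob : Node -> Day -> Scen -> R) (Hprob : forall n k p, 0 <= prob n k p)
  (spMIP spLP : Node -> Day -> Scen -> bvec d -> R)
  (HLP : forall n k p z, spLP n k p z <= spMIP n k p z)
  (cI : Node -> 'I_d -> R) (G : Node -> 'I_r -> 'I_d -> R) (h : Node -> 'I_r -> R)
  (Lb : Node -> R) (HLb : forall n z, Lb n <= Qrec pi K Psamp prob spMIP n z)
  (rpmp : (Node -> {set bvec d}) -> pd_sol R Node d r)
  (rsmp : Node -> ('I_d -> R) -> R -> seq (cut R d) -> R * bvec d)
  (benders : Node -> bvec d -> cut R d)
  (S0 : Node -> {set bvec d}) (C0 : Node -> seq (cut R d))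
  (Hrpmp : forall S : Node -> {set bvec d}, (forall n, S0 n \subset S n) ->
     pd_optimal parent pi K Psamp prob spMIP cI G h S (rpmp S))
  (Hrsmp : forall n psi psi0 cs, rsmp_optimal Lb n psi psi0 cs (rsmp n psi psi0 cs))
  (Hbenders_valid : forall n zh z,
     cutval (benders n zh) z <= QLPrec pi K Psamp prob spLP n z)
  (Hbenders_tight : forall n zh,
     cutval (benders n zh) zh = QLPrec pi K Psamp prob spLP n zh)
  (HC0 : forall n z, all (fun c => cutval c z <= Qrec pi K Psamp prob spMIP n z) (C0 n)) :
  exists (nout nin : nat) (x : Node -> 'I_d -> R) (lam : Node -> bvec d -> R),
    outer pi K Psamp prob spMIP spLP Lb rpmp rsmp benders nout nin S0 C0 = Some (x, lam)
    /\ pmp_optimal parent pi K Psamp prob spMIP cI G h x lam.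
Proof.
have [x [lam [run opt]]] := outer_solves Hpi Hprob HLP HLb Hrsmp Hbenders_valid
  Hbenders_tight Hrpmp (fun n => subxx (S0 n)) HC0 (ltnSn (column_slack S0)).
by exists (column_slack S0).+1, (inner_fuel d), x, lam.
Qed.
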